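(* Let $\alpha,\beta,\gamma>0$ with $\gamma^2-\alpha\beta>0$ and $n\ge2$. Then $Z_n^{\mathcal{GS}}=Z_n$, where $Z_n$ is the partition function of the six-vertex model on $\mathbb{T}_n$ with weights $a_1=1$, $a_2=\gamma^2-\alpha\beta$, $b_1=\beta$, $b_2=\alpha$, $c_1=c_2=\gamma$. In particular $Z_n^{\mathcal{GS}}>0$.
   Context: Six-vertex model on $\mathbb{T}_n=(\mathbb{Z}/n\mathbb{Z})^2$: orientations of edges with two in and two out at each vertex; vertex types (weights): type 1 ($a_1$): horizontal right, vertical up; type 2 ($a_2$): horizontal left, vertical down; type 3 ($b_1$): horizontal right, vertical down; type 4 ($b_2$): horizontal left, vertical up; type 5 ($c_1$): horizontal in, vertical out; type 6 ($c_2$): horizontal out, vertical in. $Z_n=\sum_\sigma\prod_v(\text{weight of type at }v)$. Snakes: $e^1=(1,0)$, $e^2=(0,1)$, $e^3=\frac12(e^1+e^2)$; mid-edges $\mathbb{M}_n$ = black $\{v+\frac12e^1\}$ ⊔ white $\{v+\frac12e^2\}$, $v\in\mathbb{T}_n$, mod $n$. A generalised snake configuration is a permutation $\bar\rho$ of $\mathbb{M}_n$ with $\bar\rho(x)\in\{x,x+e^3,x+e^1\}$ ($x$ black), $\bar\rho(x)\in\{x,x+e^3,x+e^2\}$ ($x$ white); $\mathcal{GS}_n$ their set. $S(\bar\rho)$ = number of vertices $v$ with $\bar\rho(v-\frac12e^1)=v+\frac12e^1$ and $\bar\rho(v-\frac12e^2)=v+\frac12e^2$; $A,B,C$ = numbers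 of $x$ with $\bar\rho(x)=x+e^1$, $x+e^2$, $x+e^3$ respectively. $Z_n^{\mathcal{GS}}=\sum_{\bar\rho\in\mathcal{GS}_n}(-1)^{S(\bar\rho)}\alpha^{A(\bar\rho)}\beta^{B(\bar\rho)}\gamma^{C(\bar\rho)}$. *)

From HB Require Import structures.
From mathcomp Require Import all_boot all_order all_algebra all_fingroup.
Set Implicit Arguments. Unset Strict Implicit. Unset Printing Implicit Defensive.
Import Order.TTheory GRing.Theory Num.Theory.
Local Open Scope ring_scope.

Definition vert (n : nat) := ('Z_n * 'Z_n)%type.

(* Mid-edges M_n: (true, v) is the black mid-edge v + e1/2,
   (false, v) is the white mid-edge v + e2/2. *)
Definition mid (n : nat) := (bool * vert n)%type.

Definition addE1 n (x : mid n) : mid n := (x.1, (x.2.1 + 1, x.2.2)).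
Definition addE2 n (x : mid n) : mid n := (x.1, (x.2.1, x.2.2 + 1)).
(* x + e3 with e3 = (e1+e2)/2 *)
Definition addE3 n (x : mid n) : mid n :=
  if x.1 then (false, (x.2.1 + 1, x.2.2)) else (true, (x.2.1, x.2.2 + 1)).

Definition is_gsnake n (rho : {perm mid n}) : bool :=
  [forall x : mid n,
     if x.1 then rho x \in [:: x; addE3 x; addE1 x]
     else rho x \in [:: x; addE3 x; addE2 x]].

Definition snakeS n (rho : {perm mid n}) : nat :=
  #|[set v : vert n | (rho (true, (v.1 - 1, v.2)) == (true, v))
                      && (rho (false, (v.1, v.2 - 1)) == (false, v))]|.
Definition snakeA n (rho : {perm mid n}) : nat := #|[set x : mid n | rho x == addE1 x]|.
Definition snakeB n (rho : {perm mid n}) : nat := #|[set x : mid n | rho x == addE2 x]|.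
Definition snakeC n (rho : {perm mid n}) : nat := #|[set x : mid n | rho x == addE3 x]|.

Definition ZGS (R : comRingType) (n : nat) (alpha beta gamma : R) : R :=
  \sum_(rho : {perm mid n} | is_gsnake rho)
     (-1) ^+ snakeS rho * alpha ^+ snakeA rho * beta ^+ snakeB rho
       * gamma ^+ snakeC rho.

(* Edge orientations: for sigma : {ffun mid n -> bool},
   sigma (true, v) = true  iff the horizontal edge {v, v+e1} points right,
   sigma (false, v) = true iff the vertical edge {v, v+e2} points up. *)
Definition hL n (s : {ffun mid n -> bool}) (v : vert n) := s (true, (v.1 - 1, v.2)).
Definition hR n (s : {ffun mid n -> bool}) (v : vert n) := s (true, v).
Definition vB n (s : {ffun mid n -> bool}) (v : vert n) := s (false, (v.1, v.2 - 1)).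
Definition vT n (s : {ffun mid n -> bool}) (v : vert n) := s (false, v).

(* ice rule: two incoming and two outgoing edges at v *)
Definition ice n (s : {ffun mid n -> bool}) (v : vert n) : bool :=
  (hL s v + ~~ hR s v + vB s v + ~~ vT s v == 2)%N.

Definition vweight (R : comRingType) n (a1 a2 b1 b2 c1 c2 : R)
  (s : {ffun mid n -> bool}) (v : vert n) : R :=
  match hL s v, hR s v, vB s v, vT s v with
  | true, true, true, true => a1      (* right, up *)
  | false, false, false, false => a2  (* left, down *)
  | true, true, false, false => b1    (* right, down *)
  | false, false, true, true => b2    (* left, up *)
  | true, false, false, true => c1    (* horizontal in, vertical out *)
  | false, true, true, false => c2    (* horizontal out, vertical in *)
  | _, _, _, _ => 0
  end.

Definition Z6 (R : comRingType) (n : nat) (a1 a2 b1 b2 c1 c2 : R) : R :=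
  \sum_(s : {ffun mid n -> bool} | [forall v : vert n, ice s v])
     \prod_(v : vert n) vweight a1 a2 b1 b2 c1 c2 s v.

From HB Require Import structures.
From mathcomp Require Import all_boot all_order all_algebra all_fingroup.
Import Order.TTheory GRing.Theory Num.Theory.
Set Implicit Arguments. Unset Strict Implicit. Unset Printing Implicit Defensive.

(* A generalised snake configuration moves each mid-edge in one of three ways:
   it stays, goes straight through the vertex ahead of it, or turns there.  It
   is therefore encoded by the pair of moves of the two mid-edges entering each
   vertex, and the encoded map is a permutation iff every mid-edge is reached
   exactly once.  Once the set of staying mid-edges is fixed, this is a
   condition local to each vertex.  Reading "the mid-edge stays" as "its edge
   points right/up", the weights of the admissible moves at a vertex add up to
   the six-vertex weight of its type: non-ice vertices admit no move, and a
   vertex with all edges pointing left/down admits either two straight moves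
   (weight -alpha beta) or two turns (weight gamma^2), giving a2. *)

Lemma injectiveb_card_fibers (T : finType) (f : T -> T) :
  injectiveb f = [forall y, #|[set x | f x == y]| == 1].
Proof.
apply/injectiveP/forallP => [f_inj y | fib1 x1 x2 f12].
  have [g fK gK] := injF_bij f_inj.
  apply/cards1P; exists (g y); apply/setP => x.
  by rewrite !inE -{1}[y]gK (inj_eq f_inj).
have /card_le1_eqP := eq_leq (eqP (fib1 (f x1))).
by apply; rewrite inE ?f12.
Qed.

Lemma sum_nat_pred1 (T : finType) (P : pred T) (y : T) :
  \sum_x (P x && (x == y) : nat) = P y.
Proof. by rewrite (bigD1 y) //= eqxx andbT big1 ?addn0 // => x /negbTE ->; rewrite andbF. Qed.

Lemma Zp_addr1_eq (m : nat) (w : 'Z_m) : (w + 1 == w)%R = false.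
Proof. by rewrite -subr_eq0 addrAC subrr add0r oner_eq0. Qed.

Lemma Zp_eq_addr1 (m : nat) (w : 'Z_m) : (w == w + 1)%R = false.
Proof. by rewrite eq_sym Zp_addr1_eq. Qed.

Section Routing.

Variable n : nat.
Implicit Types (x y : mid n) (v : vert n) (k : 'I_3) (b : bool).

Definition head x : vert n :=
  if x.1 then (x.2.1 + 1, x.2.2)%R else (x.2.1, x.2.2 + 1)%R.

Definition entering b v : mid n :=
  if b then (true, (v.1 - 1, v.2))%R else (false, (v.1, v.2 - 1))%R.

Arguments entering : simpl never.

Lemma head_entering b v : head (entering b v) = v.
Proof. by case: b; case: v => v1 v2; rewrite /head /= subrK. Qed.

Lemma entering_head x : entering x.1 (head x) = x.
Proof. by case: x => [[] [w1 w2]]; rewrite /head /entering /= addrK. Qed.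

Lemma color_entering b v : (entering b v).1 = b.
Proof. by case: b. Qed.

Lemma big_mid_entering (R : Type) (idx : R) (op : Monoid.com_law idx) (F : mid n -> R) :
  \big[op/idx]_x F x = \big[op/idx]_v op (F (entering true v)) (F (entering false v)).
Proof.
rewrite (reindex (fun p : mid n => entering p.1 p.2)) /=; last first.
  exists (fun x => (x.1, head x)) => [[b v] _ | x _] /=.
    by rewrite color_entering head_entering.
  by rewrite entering_head.
by rewrite -(pair_big xpredT xpredT (fun b v => F (entering b v))) big_bool /= big_split.
Qed.

(* Move [k] of [x]: 0 stays, 1 goes straight through the vertex [head x], 2 turns there. *)
Definition step x k : mid n :=
  if k == 0%N :> nat then x else (x.1 (+) (k == 2%N :> nat), head x).

Lemma step_addE1 x k : (step x k == addE1 x) = x.1 && (k == 1%N :> nat).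
Proof.
case: x => [[] [w1 w2]]; case: k => [[|[|[|i]]] ?] //=.
all: by rewrite /step /addE1 /head /= !xpair_eqE /= ?Zp_addr1_eq ?Zp_eq_addr1 ?eqxx ?andbF.
Qed.

Lemma step_addE2 x k : (step x k == addE2 x) = ~~ x.1 && (k == 1%N :> nat).
Proof.
case: x => [[] [w1 w2]]; case: k => [[|[|[|i]]] ?] //=.
all: by rewrite /step /addE2 /head /= !xpair_eqE /= ?Zp_addr1_eq ?Zp_eq_addr1 ?eqxx ?andbF.
Qed.

Lemma step_addE3 x k : (step x k == addE3 x) = (k == 2%N :> nat).
Proof.
case: x => [[] [w1 w2]]; case: k => [[|[|[|i]]] ?] //=.
all: by rewrite /step /addE3 /head /= !xpair_eqE /= ?Zp_addr1_eq ?Zp_eq_addr1 ?eqxx ?andbF.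
Qed.

Lemma step_stay x k : (step x k == x) = (k == 0%N :> nat).
Proof.
case: x => [[] [w1 w2]]; case: k => [[|[|[|i]]] ?] //=.
all: by rewrite /step /head /= !xpair_eqE /= ?Zp_addr1_eq ?Zp_eq_addr1 ?eqxx ?andbF.
Qed.

Lemma step_straight x k : (step x k == (x.1, head x)) = (k == 1%N :> nat).
Proof.
case: x => [[] [w1 w2]]; case: k => [[|[|[|i]]] ?] //=.
all: by rewrite /step /head /= !xpair_eqE /= ?Zp_addr1_eq ?Zp_eq_addr1 ?eqxx ?andbF.
Qed.

Lemma step_inj x : injective (step x).
Proof.
move=> k1 k2 e; apply: val_inj.
have := step_stay x k1; have := step_straight x k1; rewrite e step_stay step_straight.
by case: k1 k2 {e} => [[|[|[|?]]] ?] [[|[|[|?]]] ?].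
Qed.

Lemma stepP x y :
  reflect (exists k, step x k = y)
    (if x.1 then y \in [:: x; addE3 x; addE1 x] else y \in [:: x; addE3 x; addE2 x]).
Proof.
have e2 : step x (inord 2) = addE3 x by apply/eqP; rewrite step_addE3 inordK.
have e1 : step x (inord 1) = if x.1 then addE1 x else addE2 x.
  by apply/eqP; case: ifP => hx; rewrite ?step_addE1 ?step_addE2 hx inordK.
apply: (iffP idP) => [|[k <-]].
  case: ifP e1 => _ e1; rewrite !inE => /or3P[] /eqP ->;
  by [exists ord0 | exists (inord 2) | exists (inord 1)].
case: ifP => hx; rewrite !inE step_addE3 ?step_addE1 ?step_addE2 hx /=.
all: by case: k => [[|[|[|i]]] ?]; rewrite ?eqxx ?orbT.
Qed.

Definition routing := {ffun vert n -> 'I_3 * 'I_3}.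
Definition move_at (c : 'I_3 * 'I_3) b : 'I_3 := if b then c.1 else c.2.
Implicit Types (g : routing) (f : mid n -> mid n).

Definition move g x : 'I_3 := move_at (g (head x)) x.1.
Definition route g : {ffun mid n -> mid n} := [ffun x => step x (move g x)].
Definition stays g : {ffun mid n -> bool} := [ffun x => move g x == 0%N :> nat].

Lemma move_entering g b v : move g (entering b v) = move_at (g v) b.
Proof. by rewrite /move head_entering color_entering. Qed.

Lemma stays_entering g b v : stays g (entering b v) = (move_at (g v) b == 0%N :> nat).
Proof. by rewrite ffunE move_entering. Qed.

Definition move_of f x : 'I_3 := odflt ord0 [pick k | step x k == f x].
Definition routing_of f : routing :=
  [ffun v => (move_of f (entering true v), move_of f (entering false v))].

Lemma eq_routing_of f1 f2 : f1 =1 f2 -> routing_of f1 = routing_of f2.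
Proof. by move=> f12; apply/ffunP => v; rewrite !ffunE /move_of !f12. Qed.

Lemma move_routing_of f x : move (routing_of f) x = move_of f x.
Proof. by rewrite /move ffunE -[in RHS](entering_head x); case: (x.1). Qed.

Lemma route_routing_of f : (forall x, exists k, step x k = f x) -> route (routing_of f) =1 f.
Proof.
move=> fP x; rewrite ffunE move_routing_of /move_of; case: pickP => [k /eqP // | none].
by have [k /eqP] := fP x; rewrite none.
Qed.

Lemma routing_of_route g : routing_of (route g) = g.
Proof.
apply/ffunP => v; rewrite ffunE.
have moveE b : move_of (route g) (entering b v) = move_at (g v) b.
  rewrite -move_entering /move_of; case: pickP => [k | /(_ (move g (entering b v)))].
    by rewrite ffunE => /eqP /step_inj.
  by rewrite ffunE eqxx.
by rewrite !moveE; case: (g v).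
Qed.

Definition perm_of_routing g : {perm mid n} := insubd (1%g : {perm mid n}) (route g).

Lemma perm_of_routingE g : injectiveb (route g) -> perm_of_routing g =1 route g.
Proof. by move=> inj x; rewrite /perm_of_routing -pvalE insubdK. Qed.

Lemma perm_of_routing1 g : ~~ injectiveb (route g) -> perm_of_routing g = 1%g.
Proof. by move=> ninj; apply: val_inj; rewrite /perm_of_routing val_insubd (negbTE ninj). Qed.

Lemma is_gsnakeP (rho : {perm mid n}) :
  reflect (forall x, exists k, step x k = rho x) (is_gsnake rho).
Proof. by apply: (iffP forallP) => rhoP x; apply/stepP. Qed.

Lemma perm_of_routing_gsnakeE g :
  is_gsnake (perm_of_routing g) && (routing_of (perm_of_routing g) == g) = injectiveb (route g).
Proof.
have [inj | ninj] := boolP (injectiveb (route g)).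
  have routeE := perm_of_routingE inj.
  rewrite (eq_routing_of routeE) routing_of_route eqxx andbT.
  by apply/is_gsnakeP => x; exists (move g x); rewrite routeE ffunE.
rewrite perm_of_routing1 //; apply: contraNF ninj => /andP[gs1 /eqP <-].
apply/injectiveP => x y; rewrite !(route_routing_of (elimT (is_gsnakeP _) gs1)).
exact: perm_inj.
Qed.

Definition lands (k : 'I_3) (e b : bool) : bool :=
  (k != 0%N :> nat) && (e (+) (k == 2%N :> nat) == b).

Definition arrivals (c : 'I_3 * 'I_3) (b : bool) : nat :=
  lands c.1 true b + lands c.2 false b.

Definition admissible (c : 'I_3 * 'I_3) (hl hr vb vt : bool) : bool :=
  [&& (c.1 == 0%N :> nat) == hl, (c.2 == 0%N :> nat) == vb,
      hr + arrivals c true == 1 & vt + arrivals c false == 1].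

Lemma card_route_fiber g b v :
  #|[set x | route g x == (b, v)]| = (stays g (b, v) + arrivals (g v) b)%N.
Proof.
rewrite -sum1dep_card big_mkcond /=.
have fiberE x : (if route g x == (b, v) then 1 else 0)
    = (stays g x && (x == (b, v)) + lands (move g x) x.1 b && (head x == v))%N.
  rewrite !ffunE /step /lands; case: (nat_of_ord (move g x) =P 0%N) => m0 /=.
    by rewrite addn0; case: eqP.
  by rewrite xpair_eqE; case: (_ && _).
rewrite (eq_bigr _ (fun x _ => fiberE x)) big_split /= sum_nat_pred1 big_mid_entering /=.
under eq_bigr => w _ do rewrite !move_entering !head_entering.
by rewrite big_split /= !sum_nat_pred1.
Qed.

Lemma routing_admissibleE g s :
  (stays g == s) && injectiveb (route g)
  = [forall v, admissible (g v) (hL s v) (hR s v) (vB s v) (vT s v)].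
Proof.
have hLE (t : {ffun mid n -> bool}) v : hL t v = t (entering true v) by [].
have vBE (t : {ffun mid n -> bool}) v : vB t v = t (entering false v) by [].
rewrite injectiveb_card_fibers; apply/andP/forallP => [[/eqP <- /forallP fib1] v | adm].
  rewrite /admissible hLE vBE !stays_entering !eqxx /hR /vT.
  by rewrite -!card_route_fiber !fib1.
have stays_s : stays g = s.
  apply/ffunP => x; rewrite -(entering_head x) stays_entering.
  have := adm (head x); rewrite /admissible hLE vBE => /and4P[/eqP e1 /eqP e2 _ _].
  by case: (x.1); rewrite /= ?e1 ?e2.
split; first by rewrite stays_s.
apply/forallP => -[b v]; rewrite card_route_fiber stays_s.
by case/and4P: (adm v) => _ _; case: b.
Qed.

Lemma route_entering_straight g b v :
  (route g (entering b v) == (b, v)) = (move_at (g v) b == 1%N :> nat).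
Proof.
have := step_straight (entering b v) (move_at (g v) b).
by rewrite color_entering head_entering ffunE move_entering.
Qed.

Lemma card_perm_of_routing g (E : mid n -> mid n) (P : bool -> 'I_3 -> bool) :
  injectiveb (route g) -> (forall x k, (step x k == E x) = P x.1 k) ->
  #|[set x | perm_of_routing g x == E x]| = \sum_v (P true (g v).1 + P false (g v).2)%N.
Proof.
move=> inj PE; rewrite -sum1dep_card big_mkcond big_mid_entering /=.
apply: eq_bigr => v _; rewrite !perm_of_routingE // !ffunE !PE !color_entering.
by rewrite !move_entering /=; case: (P true _); case: (P false _).
Qed.

Section Statistics.

Variables (g : routing) (inj : injectiveb (route g)).

Lemma snakeS_routing :
  snakeS (perm_of_routing g) = \sum_v ((g v).1 == 1%N :> nat) && ((g v).2 == 1%N :> nat).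
Proof.
rewrite /snakeS -sum1dep_card big_mkcond; apply: eq_bigr => v _.
have -> : (true, (v.1 - 1, v.2))%R = entering true v by [].
have -> : (false, (v.1, v.2 - 1))%R = entering false v by [].
by rewrite !perm_of_routingE // !route_entering_straight; case: (_ && _).
Qed.

Lemma snakeA_routing : snakeA (perm_of_routing g) = \sum_v ((g v).1 == 1%N :> nat).
Proof.
rewrite /snakeA (@card_perm_of_routing g _ (fun b k => b && (k == 1%N :> nat))) //.
  by apply: eq_bigr => v _; rewrite addn0.
exact: step_addE1.
Qed.

Lemma snakeB_routing : snakeB (perm_of_routing g) = \sum_v ((g v).2 == 1%N :> nat).
Proof.
rewrite /snakeB (@card_perm_of_routing g _ (fun b k => ~~ b && (k == 1%N :> nat))) //.
exact: step_addE2.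
Qed.

Lemma snakeC_routing :
  snakeC (perm_of_routing g) = \sum_v (((g v).1 == 2%N :> nat) + ((g v).2 == 2%N :> nat))%N.
Proof.
rewrite /snakeC (@card_perm_of_routing g _ (fun b k => k == 2%N :> nat)) //.
exact: step_addE3.
Qed.

End Statistics.

End Routing.

Local Open Scope ring_scope.

Definition move_weight (R : comNzRingType) (alpha beta gamma : R) (c : 'I_3 * 'I_3) : R :=
  (-1) ^+ ((c.1 == 1%N :> nat) && (c.2 == 1%N :> nat)) * alpha ^+ (c.1 == 1%N :> nat)
  * beta ^+ (c.2 == 1%N :> nat) * gamma ^+ ((c.1 == 2%N :> nat) + (c.2 == 2%N :> nat))%N.

Section Expansion.

Variables (R : comNzRingType) (alpha beta gamma : R) (n : nat).

Lemma snake_weight_routing (g : routing n) : injectiveb (route g) ->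
  (-1) ^+ snakeS (perm_of_routing g) * alpha ^+ snakeA (perm_of_routing g)
    * beta ^+ snakeB (perm_of_routing g) * gamma ^+ snakeC (perm_of_routing g)
  = \prod_v move_weight alpha beta gamma (g v).
Proof.
move=> inj; rewrite snakeS_routing // snakeA_routing // snakeB_routing // snakeC_routing //.
by rewrite /move_weight !big_split /= !prodrXr [in RHS]big_split.
Qed.

Lemma ZGS_sum_routing :
  ZGS n alpha beta gamma
  = \sum_(g : routing n | injectiveb (route g)) \prod_v move_weight alpha beta gamma (g v).
Proof.
rewrite /ZGS (reindex_onto (@perm_of_routing n) (@routing_of n)) /=; last first.
  move=> rho /is_gsnakeP rhoP; have routeE := route_routing_of rhoP.
  have inj : injectiveb (route (routing_of rho)).
    by apply/injectiveP => x1 x2; rewrite !routeE; apply: perm_inj.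
  by apply/permP => x; rewrite perm_of_routingE.
rewrite (eq_bigl _ _ (@perm_of_routing_gsnakeE n)).
by apply: eq_bigr => g; apply: snake_weight_routing.
Qed.

Lemma sum_routing_vertexwise :
  \sum_(g : routing n | injectiveb (route g)) \prod_v move_weight alpha beta gamma (g v)
  = \sum_(s : {ffun mid n -> bool}) \prod_v
      \sum_(c | admissible c (hL s v) (hR s v) (vB s v) (vT s v)) move_weight alpha beta gamma c.
Proof.
rewrite (partition_big (@stays n) xpredT) //; apply: eq_bigr => s _.
pose admissible_at v := [pred c | admissible c (hL s v) (hR s v) (vB s v) (vT s v)].
rewrite (eq_bigl (fun g => g \in family admissible_at)); last first.
  by move=> g; rewrite andbC routing_admissibleE; apply/forallP/familyP.
by rewrite (bigA_distr_big_dep admissible_at (fun _ c => move_weight alpha beta gamma c)).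
Qed.

Lemma sum_admissible_move_weight (s : {ffun mid n -> bool}) v :
  \sum_(c | admissible c (hL s v) (hR s v) (vB s v) (vT s v)) move_weight alpha beta gamma c
  = vweight 1 (gamma ^+ 2 - alpha * beta) beta alpha gamma gamma s v.
Proof.
have pairE (F : 'I_3 * 'I_3 -> R) : \sum_c F c = \sum_i \sum_j F (i, j).
  by rewrite pair_bigA; apply: eq_bigr => -[].
rewrite big_mkcond pairE /= !big_ord_recl !big_ord0 /vweight.
case: (hL s v); case: (hR s v); case: (vB s v); case: (vT s v).
all: rewrite /admissible /arrivals /lands /move_weight /= ?expr0 ?expr1 ?mulr1 ?mul1r ?addr0 ?add0r //.
by rewrite mulN1r mulNr addrC.
Qed.

End Expansion.

Lemma vweight_non_ice (R : comNzRingType) n (a1 a2 b1 b2 c1 c2 : R) s (v : vert n) :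
  ~~ ice s v -> vweight a1 a2 b1 b2 c1 c2 s v = 0.
Proof. by rewrite /ice /vweight; case: (hL s v); case: (hR s v); case: (vB s v); case: (vT s v). Qed.

Lemma ZGS_eq_Z6 (R : comNzRingType) n (alpha beta gamma : R) :
  ZGS n alpha beta gamma = Z6 n 1 (gamma ^+ 2 - alpha * beta) beta alpha gamma gamma.
Proof.
rewrite ZGS_sum_routing sum_routing_vertexwise /Z6 [RHS]big_mkcond.
apply: eq_bigr => s _; under eq_bigr do rewrite sum_admissible_move_weight.
case: ifP => // /negbT /forallPn [v /vweight_non_ice vw0].
by rewrite (bigD1 v) //= vw0 mul0r.
Qed.

Lemma Z6_gt0 (R : numDomainType) n (a1 a2 b1 b2 c1 c2 : R) :
  0 < a1 -> 0 <= a2 -> 0 <= b1 -> 0 <= b2 -> 0 <= c1 -> 0 <= c2 ->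
  0 < Z6 n a1 a2 b1 b2 c1 c2.
Proof.
move=> a1_gt0 a2_ge0 b1_ge0 b2_ge0 c1_ge0 c2_ge0.
have all_up_ice : [forall v : vert n, ice ([ffun => true] : {ffun mid n -> bool}) v].
  by apply/forallP => v; rewrite /ice /hL /hR /vB /vT !ffunE.
rewrite /Z6 (bigD1 _ all_up_ice) /= ltr_wpDr //.
  apply: sumr_ge0 => s _; apply: prodr_ge0 => v _; rewrite /vweight.
  have a1_ge0 := ltW a1_gt0.
  by case: (hL s v); case: (hR s v); case: (vB s v); case: (vT s v); rewrite ?lexx.
by apply: prodr_gt0 => v _; rewrite /vweight /hL /hR /vB /vT !ffunE.
Qed.

Theorem corollary2p4 (R : realFieldType) (alpha beta gamma : R) (n : nat)
  (ha : 0 < alpha) (hb : 0 < beta) (hg : 0 < gamma)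
  (hd : 0 < gamma ^+ 2 - alpha * beta) (hn : (2 <= n)%N) :
  ZGS n alpha beta gamma
    = Z6 n 1 (gamma ^+ 2 - alpha * beta) beta alpha gamma gamma
  /\ 0 < ZGS n alpha beta gamma.
Proof.
split; first exact: ZGS_eq_Z6.
by rewrite ZGS_eq_Z6 Z6_gt0 ?ltr01 ?ltW.
Qed.
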